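(* Consider the system $x_{k+1}=Ax_k+Bu_k$ with constraint sets $\mathcal{X}=\{x\mid C_xx\le c_x\}$, $\mathcal{U}=\{u\mid C_uu\le c_u\}$ (with $0\in\operatorname{int}\mathcal{X}$, $0\in\operatorname{int}\mathcal{U}$) and equilibrium at the origin, controlled by a ReLU network $u_k=\mathcal{N}(x_k;\theta)$ with $L$ hidden layers, i.e. $x_{k+1}=f_{\text{cl}}(x_k)=Ax_k+B\mathcal{N}(x_k;\theta)$. Let $\Gamma_{\text{eq}}=G(0)$, $\mathcal{R}_{\text{eq}}=\{x\mid G(x)=\Gamma_{\text{eq}}\}$, and suppose $W_{L+1}b_{\Gamma_{\text{eq}},L}+b_{L+1}=0$ and all eigenvalues of $A+BW_{L+1}W_{\Gamma_{\text{eq}},L}$ have modulus strictly less than $1$. Let $\mathcal{R}_K$ be the set of initial states from which the linear feedback $u_k=W_{L+1}W_{\Gamma_{\text{eq}},L}x_k$ yields a trajectory with $x_k\in\mathcal{X}$, $u_k\in\mathcal{U}$ for all $k\ge0$ converging to the origin, and let $\mathcal{R}_{\text{as}}$ be an admissible control-invariant set for the closed loop with $\mathcal{R}_{\text{as}}\subseteq\mathcal{R}_{\text{eq}}\cap\mathcal{R}_K$. Let $\mathcal{X}_{\text{in}}=\{x\mid C_{\text{in}}x\le c_{\text{in}}\}$ be a polytope, $k\ge1$, $C_{\text{out}}\in\mathbb{R}^{n_{\text{out}}\times n_x}$, and define $c_{\text{out}}^{*(i)}=\max_{x_0\in\mathcal{X}_{\text{in}}}C_{\text{out}}^{(i)}f_{\text{cl}}^{k}(x_0)$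 (where $f_{\text{cl}}^k$ is the $k$-fold composition of $f_{\text{cl}}$) and $\mathcal{X}^*_{k,\text{out}}=\{x\mid C_{\text{out}}x\le c_{\text{out}}^*\}$. If $\mathcal{X}^*_{k,\text{out}}\subseteq\mathcal{R}_{\text{as}}$, then the closed-loop system is asymptotically stable for all $x\in\mathcal{X}_{\text{in}}$, i.e. every closed-loop trajectory starting in $\mathcal{X}_{\text{in}}$ converges asymptotically to the origin.
   Context: A ReLU network is $\mathcal{N}(x;\theta)=W_{L+1}\xi_L+b_{L+1}$ with $\xi_0=x$, $\xi_l=\max(0,W_l\xi_{l-1}+b_l)$ elementwise for $l=1,\dots,L$, where $W_l\in\mathbb{R}^{n_l\times n_{l-1}}$ ($n_0=n_x$), $b_l\in\mathbb{R}^{n_l}$, $W_{L+1}\in\mathbb{R}^{n_u\times n_L}$, $b_{L+1}\in\mathbb{R}^{n_u}$. The activation pattern is $G(x)=(\gamma_1(x),\dots,\gamma_L(x))$, $\gamma_l(x)^{(i)}=1$ iff $W_l^{(i)}\xi_{l-1}+b_l^{(i)}\ge0$, else $0$. For a fixed pattern $\Gamma=(\gamma_1,\dots,\gamma_L)$ set $\eta_0=x$, $\eta_l=\gamma_l\odot(W_l\eta_{l-1}+b_l)$; then $\eta_L=W_{\Gamma,L}x+b_{\Gamma,L}$ defines $W_{\Gamma,L}\in\mathbb{R}^{n_L\times n_x}$, $b_{\Gamma,L}\in\mathbb{R}^{n_L}$. A set $\mathcal{C}$ is an admissible control-invariant set for the closed loop if $\mathcal{N}(x;\theta)\in\mathcal{U}$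 for all $x\in\mathcal{C}$ and $f_{\text{cl}}(\mathcal{C})\subseteq\mathcal{C}$. $M^{(i)}$ is the $i$-th row of $M$, $v^{(i)}$ the $i$-th entry of $v$. *)

From HB Require Import structures.
From mathcomp Require Import all_boot all_order all_algebra.
From mathcomp Require Import all_classical all_reals all_analysis.
From mathcomp Require Import complex.
Set Implicit Arguments. Unset Strict Implicit. Unset Printing Implicit Defensive.
Import Order.TTheory GRing.Theory Num.Theory.
Import numFieldNormedType.Exports.
Local Open Scope classical_set_scope.
Local Open Scope ring_scope.

Section ReluNet.
Variable R : realType.

Definition mxle (m n : nat) (A B : 'M[R]_(m, n)) : Prop := forall i j, A i j <= B i j.

Definition polyhedron (m n : nat) (C : 'M[R]_(m, n)) (c : 'cV[R]_m) : set 'cV[R]_n :=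
  [set x | mxle (C *m x) c].

(* stack of hidden layers: hid n_0 n_L, first layer at the head *)
Inductive hid : nat -> nat -> Type :=
| HNil (n : nat) : hid n n
| HCons (nin nh nout : nat) (W : 'M[R]_(nh, nin)) (b : 'cV[R]_nh)
        (rest : hid nh nout) : hid nin nout.

Record relu_net (nx nu : nat) := RNet {
  nL : nat;
  hidden : hid nx nL;
  Wout : 'M[R]_(nu, nL);
  bout : 'cV[R]_nu }.

Definition relu (n : nat) (v : 'cV[R]_n) : 'cV[R]_n := map_mx (fun a => Num.max 0 a) v.

Fixpoint hid_eval (nin nout : nat) (h : hid nin nout) : 'cV[R]_nin -> 'cV[R]_nout :=
  match h in hid a b return 'cV[R]_a -> 'cV[R]_b with
  | HNil _ => fun x => x
  | HCons _ _ _ W b rest => fun x => hid_eval rest (relu (W *m x + b))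
  end.

Definition net_eval (nx nu : nat) (N : relu_net nx nu) (x : 'cV[R]_nx) : 'cV[R]_nu :=
  Wout N *m hid_eval (hidden N) x + bout N.

Fixpoint hid_pattern (nin nout : nat) (h : hid nin nout) : 'cV[R]_nin -> seq (seq bool) :=
  match h in hid a b return 'cV[R]_a -> seq (seq bool) with
  | HNil _ => fun _ => [::]
  | HCons _ nh _ W b rest => fun x =>
      let z := W *m x + b in
      [seq (0 <= z i 0) | i <- enum 'I_nh] :: hid_pattern rest (relu z)
  end.

Definition activation_pattern (nx nu : nat) (N : relu_net nx nu) (x : 'cV[R]_nx) :=
  hid_pattern (hidden N) x.

(* eta_l = gamma_l (.) (W_l eta_{l-1} + b_l) for a fixed pattern Gamma; returns eta_L *)
Fixpoint hid_masked (nin nout : nat) (h : hid nin nout) (G : seq (seq bool))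
  : 'cV[R]_nin -> 'cV[R]_nout :=
  match h in hid a b return 'cV[R]_a -> 'cV[R]_b with
  | HNil _ => fun x => x
  | HCons _ _ _ W b rest => fun x =>
      hid_masked rest (behead G)
        (\col_i ((nth false (head [::] G) i)%:R * (W *m x + b) i 0))
  end.

(* eta_L = W_{Gamma,L} x + b_{Gamma,L} *)
Definition b_pat (nin nout : nat) (h : hid nin nout) (G : seq (seq bool)) : 'cV[R]_nout :=
  hid_masked h G 0.
Definition W_pat (nin nout : nat) (h : hid nin nout) (G : seq (seq bool)) : 'M[R]_(nout, nin) :=
  \matrix_(i, j) (hid_masked h G (delta_mx j 0) i 0 - b_pat h G i 0).

Definition fcl (nx nu : nat) (A : 'M[R]_nx) (B : 'M[R]_(nx, nu)) (N : relu_net nx nu)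
  (x : 'cV[R]_nx) : 'cV[R]_nx := A *m x + B *m net_eval N x.

Definition R_eq (nx nu : nat) (N : relu_net nx nu) : set 'cV[R]_nx :=
  [set x | activation_pattern N x = activation_pattern N 0].

Definition R_K (nx nu mx mu : nat) (A : 'M[R]_nx) (B : 'M[R]_(nx, nu))
  (Cx : 'M[R]_(mx, nx)) (cx : 'cV[R]_mx) (Cu : 'M[R]_(mu, nu)) (cu : 'cV[R]_mu)
  (K : 'M[R]_(nu, nx)) : set 'cV[R]_nx :=
  [set x0 | let traj := fun k => iter k (fun x => A *m x + B *m (K *m x)) x0 in
            (forall k, polyhedron Cx cx (traj k) /\ polyhedron Cu cu (K *m traj k)) /\
            traj k @[k --> \oo] --> (0 : 'cV[R]_nx)].

Definition adm_ctrl_invariant (nx nu mu : nat) (A : 'M[R]_nx) (B : 'M[R]_(nx, nu))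
  (Cu : 'M[R]_(mu, nu)) (cu : 'cV[R]_mu) (N : relu_net nx nu) (S : set 'cV[R]_nx) : Prop :=
  (forall x, S x -> polyhedron Cu cu (net_eval N x)) /\
  (forall x, S x -> S (fcl A B N x)).

End ReluNet.

From HB Require Import structures.
From mathcomp Require Import all_boot all_order all_algebra.
From mathcomp Require Import all_classical all_reals all_analysis.
From mathcomp Require Import complex.
Set Implicit Arguments. Unset Strict Implicit. Unset Printing Implicit Defensive.
Import Order.TTheory GRing.Theory Num.Theory.
Import numFieldNormedType.Exports.
Local Open Scope classical_set_scope.
Local Open Scope ring_scope.

(* Inside the activation region R_eq the network coincides with its masked network
   for the pattern Geq, an affine map W x + b; the offset condition makes it the
   linear feedback K x.  Hence on the invariant set Ras, contained in R_eq, the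
   closed loop is the linear loop x -> A x + B K x.  Every state reached after k
   steps from X_in satisfies C_out x <= c*, so it lies in Ras, and from there the
   trajectory is a linear-feedback trajectory, which converges because Ras is
   contained in R_K. *)

Section MaskedNetwork.
Variable R : realType.

Lemma hid_masked_affine nin nout (h : hid R nin nout) (G : seq (seq bool)) :
  exists (M : 'M[R]_(nout, nin)) (c : 'cV[R]_nout), forall x, hid_masked h G x = M *m x + c.
Proof.
elim: h G => [n|nin' nh nout' W b rest IH] G.
  by exists 1%:M, 0 => x /=; rewrite mul1mx addr0.
have [M [c affine]] := IH (behead G).
set g := fun i : 'I_nh => (nth false (head [::] G) i)%:R : R.
exists (M *m \matrix_(i, j) (g i * W i j)), (M *m \col_i (g i * b i 0) + c) => x /=.
rewrite affine addrA -mulmxA -mulmxDr; congr (M *m _ + c).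
apply/matrixP => i j; rewrite [j]ord1 !mxE mulrDr; congr (_ + _).
by rewrite mulr_sumr; apply: eq_bigr => l _; rewrite !mxE mulrA.
Qed.

Lemma hid_maskedE nin nout (h : hid R nin nout) (G : seq (seq bool)) x :
  hid_masked h G x = W_pat h G *m x + b_pat h G.
Proof.
have [M [c affine]] := hid_masked_affine h G.
have -> : W_pat h G = M.
  apply/matrixP => i j; rewrite /W_pat /b_pat !mxE !affine mulmx0 add0r !mxE addrK.
  rewrite (bigD1 j) //= big1 ?addr0; first by rewrite !mxE !eqxx mulr1.
  by move=> l /negbTE Hl; rewrite !mxE Hl mulr0.
by rewrite affine /b_pat affine mulmx0 add0r.
Qed.

Lemma hid_eval_masked nin nout (h : hid R nin nout) x :
  hid_eval h x = hid_masked h (hid_pattern h x) x.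
Proof.
elim: h x => [n|nin' nh nout' W b rest IH] x //=.
rewrite IH; congr (hid_masked _ _ _).
apply/matrixP => i j; rewrite [j]ord1 !mxE.
rewrite (nth_map i) ?size_enum_ord // nth_ord_enum.
case: leP; rewrite !mxE => Hz; first by rewrite mul1r max_r.
by rewrite mul0r max_l // ltW.
Qed.

Lemma net_eval_R_eq nx nu (N : relu_net R nx nu) x :
  let Geq := activation_pattern N 0 in
  Wout N *m b_pat (hidden N) Geq + bout N = 0 ->
  R_eq N x -> net_eval N x = Wout N *m W_pat (hidden N) Geq *m x.
Proof.
move=> Geq offset0 xGeq; rewrite /net_eval hid_eval_masked.
rewrite [hid_pattern _ _]xGeq hid_maskedE -/Geq.
by rewrite mulmxDr -addrA offset0 addr0 mulmxA.
Qed.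

End MaskedNetwork.

Section IterOnInvariant.
Variables (T : Type) (f g : T -> T) (S : set T).
Hypotheses (fS : forall x, S x -> S (f x)) (eq_fg : forall x, S x -> f x = g x).

Lemma iter_invariant n x : S x -> S (iter n f x).
Proof. by move=> Sx; elim: n => //= n; apply: fS. Qed.

Lemma eq_iter_invariant n x : S x -> iter n f x = iter n g x.
Proof.
move=> Sx; elim: n => //= n IH.
by rewrite -IH eq_fg //; apply: iter_invariant.
Qed.

End IterOnInvariant.

Lemma cvg_iter_shift (T : ptopologicalType) (f : T -> T) k x (p : T) :
  iter n f (iter k f x) @[n --> \oo] --> p -> iter n f x @[n --> \oo] --> p.
Proof.
have shift_k : (fun n => iter (n + k) f x) =1 (fun n => iter n f (iter k f x)).
  by move=> n; rewrite iterD.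
by move=> cvg_k; rewrite -(cvg_shiftn k) /= (eq_cvg _ _ shift_k).
Qed.

Theorem theorem1 (R : realType) (nx nu mx mu min nout : nat)
  (A : 'M[R]_nx) (B : 'M[R]_(nx, nu))
  (Cx : 'M[R]_(mx, nx)) (cx : 'cV[R]_mx) (Cu : 'M[R]_(mu, nu)) (cu : 'cV[R]_mu)
  (N : relu_net R nx nu) (Ras : set 'cV[R]_nx)
  (Cin : 'M[R]_(min, nx)) (cin : 'cV[R]_min) (k : nat)
  (Cout : 'M[R]_(nout, nx)) (cstar : 'cV[R]_nout) :
  interior (polyhedron Cx cx) (0 : 'cV[R]_nx) ->
  interior (polyhedron Cu cu) (0 : 'cV[R]_nu) ->
  fcl A B N 0 = 0 ->
  let Geq := activation_pattern N 0 in
  Wout N *m b_pat (hidden N) Geq + bout N = 0 ->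
  (forall l : R[i],
     eigenvalue (map_mx (fun r => Complex r 0)
                   (A + B *m (Wout N *m W_pat (hidden N) Geq))) l ->
     `|l| < 1) ->
  adm_ctrl_invariant A B Cu cu N Ras ->
  Ras `<=` R_eq N `&` R_K A B Cx cx Cu cu (Wout N *m W_pat (hidden N) Geq) ->
  bounded_set (polyhedron Cin cin) ->
  (0 < k)%N ->
  (forall i : 'I_nout,
     (exists2 x0, polyhedron Cin cin x0 & (Cout *m iter k (fcl A B N) x0) i 0 = cstar i 0) /\
     (forall x0, polyhedron Cin cin x0 -> (Cout *m iter k (fcl A B N) x0) i 0 <= cstar i 0)) ->
  polyhedron Cout cstar `<=` Ras ->
  forall x0, polyhedron Cin cin x0 ->
    iter n (fcl A B N) x0 @[n --> \oo] --> (0 : 'cV[R]_nx).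
Proof.
move=> _ _ _ Geq offset0 _ [_ Ras_inv] Ras_sub _ _ cstar_max out_sub x0 x0_in.
set K := Wout N *m W_pat (hidden N) Geq.
pose lin (x : 'cV[R]_nx) := A *m x + B *m (K *m x).
have fcl_lin x : Ras x -> fcl A B N x = lin x.
  by move=> /Ras_sub[xGeq _]; rewrite /fcl net_eval_R_eq.
have Ras_k : Ras (iter k (fcl A B N) x0).
  by apply: out_sub => i j; rewrite [j]ord1; apply: (cstar_max i).2.
apply: (cvg_iter_shift (k := k)).
rewrite (eq_cvg _ _ (fun n => eq_iter_invariant Ras_inv fcl_lin n Ras_k)).
by have [_ []] := Ras_sub _ Ras_k.
Qed.
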